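(* Let $F$ be a field of characteristic zero and let $\mathcal{Z}=\langle z\rangle$ be the infinite cyclic group. The only Schur rings over $\mathcal{Z}$ are the group ring $F[\mathcal{Z}]$ and the symmetric Schur ring $F[\mathcal{Z}]^{\pm}$.
   Context: For finite $C\subseteq G$, $\overline{C}=\sum_{g\in C}g\in F[G]$ and $C^*=\{g^{-1}\mid g\in C\}$. A Schur ring over a group $G$ is an $F$-subspace $\mathfrak{S}=\operatorname{Span}_F\{\overline{C}\mid C\in\mathcal{D}(\mathfrak{S})\}$ of $F[G]$ where $\mathcal{D}(\mathfrak{S})$ is a partition of $G$ into finite sets such that (i) $\{1\}\in\mathcal{D}(\mathfrak{S})$; (ii) $C\in\mathcal{D}(\mathfrak{S})\Rightarrow C^*\in\mathcal{D}(\mathfrak{S})$; (iii) for all $C,D\in\mathcal{D}(\mathfrak{S})$, $\overline{C}\,\overline{D}=\sum_{E}\lambda_{CDE}\overline{E}$ with finitely many nonzero $\lambda_{CDE}\in F$. The group ring $F[G]$ is the Schur ring with partition into singletons. For abelian $G$, the symmetric Schur ring $F[G]^{\pm}$ is the Schur ring with partition $\{\{g,g^{-1}\}\mid g\in G\}$. *)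

(* The infinite cyclic group Z = <z> is modelled additively
   as int (z^n <-> n). Finite subsets of Z are {fset int}. *)
From HB Require Import structures.
From mathcomp Require Import all_boot all_order all_algebra.
From mathcomp Require Export finmap.
Set Implicit Arguments. Unset Strict Implicit. Unset Printing Implicit Defensive.
Import Order.TTheory GRing.Theory Num.Theory.
Local Open Scope ring_scope.
Local Open Scope fset_scope.

Section SchurDefs.
Variable F : fieldType.

(* coefficient of g in \overline{C} = sum_{c in C} c *)
Definition setsum (C : {fset int}) (g : int) : F := (g \in C)%:R.

(* coefficient of g in \overline{C} \overline{D} in F[Z] *)
Definition setsum_mul (C D : {fset int}) (g : int) : F :=
  \sum_(c <- C) \sum_(d <- D) ((c + d == g)%:R : F).

Definition fset_inv (C : {fset int}) : {fset int} := [fset - c | c in C].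

Definition is_schur_partition (D : {fset int} -> Prop) : Prop :=
      (forall C, D C -> C != fset0) /\
      (forall g : int, exists C, D C /\ g \in C) /\
      (forall C C' g, D C -> D C' -> g \in C -> g \in C' -> C = C') /\
      D [fset 0%R] /\
      (forall C, D C -> D (fset_inv C)) /\
      (forall C C', D C -> D C' ->
          exists (s : seq {fset int}) (lam : {fset int} -> F),
            (forall E, E \in s -> D E) /\
            forall g, setsum_mul C C' g = \sum_(E <- s) lam E * setsum E g).

End SchurDefs.

Definition group_ring_partition (C : {fset int}) : Prop :=
  exists g : int, C = [fset g]%fset.

Definition symmetric_partition (C : {fset int}) : Prop :=
  exists g : int, C = [fset g; - g]%fset.

(* The coefficient function of any element of the Schur ring is constant on
   the blocks ("classes") of the partition.  Applied to a product of two class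
   sums, and using characteristic 0, this gives: if x = a + b and y is in the
   class of x, then y = a' + b' with a' in the class of a and b' in the class
   of b.  Applied to the p-th power of the class sum of s, which modulo p is
   supported on p times the class of s (Frobenius), it shows that no multiple
   p s (p prime) lies in the class of 1, so that class is inside {1, -1}.
   Induction on |x| through x = (x - 1) + 1 then confines every class to
   {x, -x}, and the same decomposition propagates the dichotomy "1 and -1 are
   in the same class or not" to every x, giving the symmetric Schur ring or
   the group ring. *)

From mathcomp Require Import all_boot all_order all_algebra finmap zify.
Set Implicit Arguments. Unset Strict Implicit. Unset Printing Implicit Defensive.
Import GRing.Theory Num.Theory.
Local Open Scope fset_scope.
Local Open Scope ring_scope.

Lemma sum_eq_uniq_mem (R : nzSemiRingType) (T : eqType) (s : seq T) a :
  uniq s -> \sum_(x <- s) ((x == a)%:R : R) = (a \in s)%:R.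
Proof. by move=> us; rewrite -natr_sum -big_mkcond /= sum1_count count_uniq_mem. Qed.

Lemma natf_inj (R : idomainType) : [pchar R] =i pred0 ->
  injective (fun n : nat => n%:R : R).
Proof.
move=> charR0 m n; wlog le_mn : m n / (m <= n)%N => [hyp eq_mn|eq_mn].
  by case: (leqP m n) => [/hyp/(_ eq_mn)|/ltnW/hyp/(_ (esym eq_mn))] ->.
apply/eqP; rewrite eqn_leq le_mn -subn_eq0 /=.
by rewrite -(pcharf0P R).1 // natrB // eq_mn subrr.
Qed.

(* The coefficient of [g] in the [k]-th power of the class sum of [C]. *)
Fixpoint sum_count (C : {fset int}) (k : nat) (g : int) : nat :=
  if k is k'.+1 then \sum_(c <- C) sum_count C k' (g - c) else (g == 0)%N.

Lemma sum_countS C k g :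
  sum_count C k.+1 g = (\sum_(c <- C) sum_count C k (g - c))%N.
Proof. by []. Qed.

Lemma sum_count_eq0 (C : {fset int}) (N k : nat) g : {in C, forall c, - N%:Z <= c} ->
  g < - (k * N)%N%:Z -> sum_count C k g = 0%N.
Proof.
move=> geN; elim: k g => [|k IHk] g lt_g.
  by rewrite /= mul0n in lt_g *; case: eqP lt_g => // ->.
apply/eqP; rewrite sum_countS sum_nat_seq_eq0; apply/allP => c Cc /=.
by apply/eqP/IHk; have := geN c Cc; move: lt_g; rewrite mulSn; lia.
Qed.

Lemma coef_exp_shifted_sum (R : nzSemiRingType) (C : {fset int}) (N k i : nat) :
  {in C, forall c, - N%:Z <= c} ->
  ((\sum_(c <- C) 'X^(absz (c + N%:Z)) : {poly R}) ^+ k)`_i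
    = (sum_count C k (i%:Z - (k * N)%N%:Z))%:R.
Proof.
move=> geN; elim: k i => [|k IHk] i.
  by rewrite expr0 coef1 mul0n subr0; case: i.
rewrite exprS mulr_suml coef_sum sum_countS natr_sum; apply: eq_big_seq => c Cc.
have cN : (absz (c + N%:Z))%:Z = c + N%:Z by have := geN c Cc; lia.
rewrite coefXnM; case: ltnP => [lt_i|le_i].
  by rewrite (sum_count_eq0 geN) //; move: lt_i; rewrite -ltz_nat cN mulSn; lia.
by rewrite IHk; congr (sum_count _ _ _)%:R; move: le_i; rewrite -lez_nat mulSn; lia.
Qed.

(* Frobenius: the [p]-th power of a class sum is congruent mod [p] to its
   image under [g |-> p g]. *)
Lemma sum_count_prime_mod (C : {fset int}) p g : prime p ->
  (sum_count C p g)%:R = \sum_(c <- C) ((p%:Z * c == g)%:R : 'F_p).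
Proof.
move=> p_pr.
have [N geN le_gN] : exists2 N : nat, {in C, forall c, - N%:Z <= c} & (absz g <= N)%N.
  exists (maxn (absz g) (\max_(c <- C) absz c)) => [c Cc|]; last exact: leq_maxl.
  have : (absz c <= \max_(c <- C) absz c)%N by exact: leq_bigmax_seq.
  have := leq_maxr (absz g) (\max_(c <- C) absz c); lia.
have p_gt0 := prime_gt0 p_pr.
have i_ge0 : 0 <= g + (p * N)%N%:Z by nia.
have := coef_exp_shifted_sum 'F_p p (absz (g + (p * N)%N%:Z)) geN.
have chp : p \in [pchar {poly 'F_p}] by rewrite pchar_poly pchar_Fp.
rewrite -(pFrobenius_autE chp) rmorph_sum coef_sum.
have -> : (absz (g + (p * N)%N%:Z))%:Z - (p * N)%N%:Z = g by lia.
move=> <-; apply: eq_big_seq => c Cc.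
rewrite /= pFrobenius_autE -exprM coefXn; congr _%:R.
by apply/eqP/eqP; rewrite -eqz_nat; have := geN c Cc; nia.
Qed.

Lemma mem_fset_inv (C : {fset int}) x : (x \in fset_inv C) = (- x \in C).
Proof.
apply/imfsetP/idP => [[c Cc ->]|Cx]; first by rewrite opprK.
by exists (- x); rewrite ?opprK.
Qed.

Lemma setsum_mulE (F : fieldType) C E g :
  setsum_mul F C E g = \sum_(c <- C) setsum F E (g - c).
Proof.
apply: eq_bigr => c _; rewrite /setsum -(sum_eq_uniq_mem _ _ (fset_uniq E)).
by apply: eq_bigr => d _; congr _%:R; apply/eqP/eqP; lia.
Qed.

Section SchurPartitionOfZ.

Variables (F : fieldType) (D : {fset int} -> Prop).
Hypothesis schurD : is_schur_partition F D.

Let class_neq0 C : D C -> C != fset0.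
Proof. by case: schurD => + _; apply. Qed.

Let class_cover g : exists C, D C /\ g \in C.
Proof. by case: schurD => _ [+ _]; apply. Qed.

Let class_disjoint C C' g : D C -> D C' -> g \in C -> g \in C' -> C = C'.
Proof. by case: schurD => _ [_ [+ _]]; apply. Qed.

Let class0 : D [fset 0].
Proof. by case: schurD => _ [_ [_ []]]. Qed.

Let class_inv C : D C -> D (fset_inv C).
Proof. by case: schurD => _ [_ [_ [_ [+ _]]]]; apply. Qed.

Let class_mul C C' : D C -> D C' ->
  exists (s : seq {fset int}) (lam : {fset int} -> F),
    (forall E, E \in s -> D E) /\
    forall g, setsum_mul F C C' g = \sum_(E <- s) lam E * setsum F E g.
Proof. by case: schurD => _ [_ [_ [_ [_ ]]]]; apply. Qed.

Definition in_schur_ring (f : int -> F) :=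
  exists L : seq ({fset int} * F), (forall x, x \in L -> D x.1) /\
    forall g, f g = \sum_(x <- L) x.2 * setsum F x.1 g.

Lemma eq_in_schur_ring f h : f =1 h -> in_schur_ring f -> in_schur_ring h.
Proof. by move=> fh [L [DL eL]]; exists L; split=> // g; rewrite -fh. Qed.

Lemma in_schur_ring0 : in_schur_ring (fun=> 0).
Proof. by exists [::]; split=> // g; rewrite big_nil. Qed.

Lemma in_schur_ringD f h :
  in_schur_ring f -> in_schur_ring h -> in_schur_ring (f \+ h).
Proof.
move=> [L1 [DL1 eL1]] [L2 [DL2 eL2]]; exists (L1 ++ L2); split=> [x|g].
  by rewrite mem_cat => /orP[/DL1|/DL2].
by rewrite big_cat /= eL1 eL2.
Qed.

Lemma in_schur_ringZ a f : in_schur_ring f -> in_schur_ring (fun g => a * f g).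
Proof.
move=> [L [DL eL]]; exists [seq (x.1, a * x.2) | x <- L].
split=> [_ /mapP[x /DL Dx ->] //|g].
by rewrite big_map eL mulr_sumr; apply: eq_bigr => x _; rewrite mulrA.
Qed.

Lemma in_schur_ring_setsum_mul A B : D A -> D B -> in_schur_ring (setsum_mul F A B).
Proof.
move=> DA DB; have [s [lam [Ds es]]] := class_mul DA DB.
exists [seq (E, lam E) | E <- s]; split=> [_ /mapP[E /Ds DE ->] //|g].
by rewrite es big_map.
Qed.

Lemma in_schur_ring_conv C f : D C -> in_schur_ring f ->
  in_schur_ring (fun g => \sum_(c <- C) f (g - c)).
Proof.
move=> DC [L [DL eL]].
apply: (@eq_in_schur_ring (fun g => \sum_(x <- L) x.2 * setsum_mul F C x.1 g)).
  move=> g; under [RHS]eq_bigr do rewrite eL.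
  rewrite exchange_big; apply: eq_bigr => x _.
  by rewrite setsum_mulE mulr_sumr.
elim: L DL {eL} => [|x L IHL] DL.
  by apply: eq_in_schur_ring in_schur_ring0 => g; rewrite big_nil.
have Dx : D x.1 by apply: DL; rewrite mem_head.
have /IHL : forall y, y \in L -> D y.1 by move=> y Ly; apply: DL; rewrite inE Ly orbT.
move/(in_schur_ringD (in_schur_ringZ x.2 (in_schur_ring_setsum_mul DC Dx))).
by apply: eq_in_schur_ring => g; rewrite big_cons.
Qed.

Lemma in_schur_ring_sum_count C k : D C ->
  in_schur_ring (fun g => (sum_count C k g)%:R).
Proof.
move=> DC; elim: k => [|k IHk].
  exists [:: ([fset 0], 1)]; split=> [_ /[!inE] /eqP -> //|g].
  by rewrite big_seq1 mul1r /setsum inE.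
apply: eq_in_schur_ring (in_schur_ring_conv DC IHk) => g.
by rewrite sum_countS natr_sum.
Qed.

Definition same_class x y := exists2 C, D C & (x \in C) && (y \in C).

Lemma same_class_refl x : same_class x x.
Proof. by have [C [DC Cx]] := class_cover x; exists C; rewrite ?Cx. Qed.

Lemma same_class_sym x y : same_class x y -> same_class y x.
Proof. by case=> C DC /andP[Cx Cy]; exists C; rewrite ?Cx ?Cy. Qed.

Lemma mem_classP C x y : D C -> x \in C -> same_class x y <-> y \in C.
Proof.
move=> DC Cx; split=> [[C' DC' /andP[C'x C'y]]|Cy]; last by exists C; rewrite ?Cx.
by rewrite (class_disjoint DC DC' Cx C'x).
Qed.

Lemma same_class_dec x y : same_class x y \/ ~ same_class x y.
Proof.
have [C [DC Cx]] := class_cover x; rewrite (mem_classP _ DC Cx).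
by case: (y \in C); [left | right].
Qed.

Lemma same_classN x y : same_class x y -> same_class (- x) (- y).
Proof.
case=> C DC /andP[Cx Cy]; exists (fset_inv C); first exact: class_inv.
by rewrite !mem_fset_inv !opprK Cx Cy.
Qed.

Lemma same_class0 y : same_class 0 y -> y = 0.
Proof. by move/(mem_classP _ class0 (fset11 _)); rewrite inE => /eqP. Qed.

Lemma in_schur_ring_same_class f x y :
  in_schur_ring f -> same_class x y -> f x = f y.
Proof.
move=> [L [DL eL]] [C DC /andP[Cx Cy]]; rewrite !eL; apply: eq_big_seq => E LE.
have DE := DL E LE; rewrite /setsum; suff -> : (x \in E.1) = (y \in E.1) by [].
apply/idP/idP => [xE | yE]; first by rewrite (class_disjoint DE DC xE Cx).
by rewrite (class_disjoint DE DC yE Cy).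
Qed.

Hypothesis charF0 : [pchar F] =i pred0.

Lemma same_class_add a b y : same_class (a + b) y ->
  exists a' b', [/\ same_class a a', same_class b b' & y = a' + b'].
Proof.
move=> ab_y; have [A [DA Aa]] := class_cover a; have [B [DB Bb]] := class_cover b.
have count_nat g : setsum_mul F A B g
    = (\sum_(a' <- A) \sum_(b' <- B) (a' + b' == g)%R)%N%:R.
  by rewrite natr_sum; apply: eq_bigr => a' _; rewrite natr_sum.
have := in_schur_ring_same_class (in_schur_ring_setsum_mul DA DB) ab_y.
rewrite !count_nat => /(natf_inj charF0) eq_count.
have : (\sum_(a' <- A) \sum_(b' <- B) (a' + b' == y)%R != 0)%N.
  rewrite -eq_count sum_nat_seq_neq0; apply/hasP; exists a => //=.
  by rewrite sum_nat_seq_neq0; apply/hasP; exists b; rewrite //= eqxx.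
rewrite sum_nat_seq_neq0 => /hasP[a' Aa'] /=.
rewrite sum_nat_seq_neq0 => /hasP[b' Bb']; case: (a' + b' =P y) => // <- _.
by exists a', b'; split; [apply/(mem_classP _ DA Aa) | apply/(mem_classP _ DB Bb) |].
Qed.

(* If [t = p s] with [p] prime lay in the class of [1], the coefficients of
   the class sum of [s] raised to the [p] would agree at [t] and [1]; modulo
   [p] they are [1] and [0]. *)
Lemma same_class1 t : same_class 1 t -> t = 1 \/ t = -1.
Proof.
move=> one_t; have [t0|t_neq0] := eqVneq t 0.
  by move: one_t; rewrite t0 => /same_class_sym/same_class0/eqP; rewrite oner_eq0.
have [le_t1|gt_t1] := leqP (absz t) 1; first lia.
have p_pr := pdiv_prime gt_t1; set p := pdiv _ in p_pr.
have [s ets] : exists s, t = p%:Z * s.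
  by exists (t %/ p)%Z; rewrite mulrC divzK // dvdzE pdiv_dvd.
have [C [DC Cs]] := class_cover s.
have := in_schur_ring_same_class (in_schur_ring_sum_count p DC) one_t.
move/(natf_inj charF0)/(congr1 (fun n => n%:R : 'F_p)).
rewrite !sum_count_prime_mod // big1_seq => [|c _]; last first.
  case: eqP => // /(congr1 absz); rewrite abszM /= => /eqP.
  by rewrite muln_eq1 => /andP[/eqP p1]; move: (prime_gt1 p_pr); rewrite p1.
rewrite ets (eq_big_seq (fun c => (c == s)%:R)) => [|c _]; last first.
  by rewrite (inj_eq (mulfI _)) //; have := prime_gt0 p_pr; lia.
by rewrite sum_eq_uniq_mem ?fset_uniq // Cs /= mulr1n => /esym/eqP; rewrite oner_eq0.
Qed.

Lemma same_class_pm x y : same_class x y -> y = x \/ y = - x.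
Proof.
suff bounded n : forall x y, (absz x <= n)%N -> same_class x y -> y = x \/ y = - x.
  exact: bounded (leqnn _).
elim: n => [|n IHn] {}x {}y le_xn xy.
  have x0 : x = 0 by lia.
  by left; rewrite x0 in xy *; apply: same_class0.
wlog x_ge0 : x y le_xn xy / 0 <= x => [wlog_x|].
  have [/wlog_x|x_lt0] := lerP 0 x; first exact.
  by have := wlog_x (- x) (- y); rewrite abszN => /(_ le_xn (same_classN xy)); lia.
have [le_x1|gt_x1] := leqP (absz x) 1.
  have [x0|x1] : x = 0 \/ x = 1 by lia.
    by left; rewrite x0 in xy *; apply: same_class0.
  by rewrite x1 in xy *; apply: same_class1.
have /same_class_add [a' [b' [xa' one_b' ey]]] : same_class (x - 1 + 1) y.
  by rewrite subrK.
have a'_pm : a' = x - 1 \/ a' = - (x - 1) by apply: IHn xa'; lia.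
have b'_pm := same_class1 one_b'.
have x_pm := IHn y x ^~ (same_class_sym xy).
lia.
Qed.

Lemma same_class_opp_self x : same_class 1 (-1) -> same_class x (- x).
Proof.
move=> one_m1; have pos n : same_class n.+1%:Z (- n.+1%:Z).
  elim: n => // n IHn.
  have e : n.+2%:Z + -1 = n.+1%:Z by lia.
  move: IHn; rewrite -{1}e => /same_class_add [a' [b' [na' m1b' ey]]].
  have a'_pm := same_class_pm na'; have b'_pm := same_class_pm m1b'.
  by have <- : a' = - n.+2%:Z by lia.
case: x => [[|n]|n]; [exact: same_class_refl | exact: pos |].
by rewrite NegzE opprK; apply/same_class_sym/pos.
Qed.

Lemma same_class_opp_self_eq0 x : ~ same_class 1 (-1) -> same_class x (- x) -> x = 0.
Proof.
move=> not_one_m1; rewrite -{1}(subrK 1 x) => /same_class_add [a' [b' [xa' one_b' ey]]].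
have a'_pm := same_class_pm xa'.
case: (same_class1 one_b') => b'1; first lia.
by move: one_b'; rewrite b'1.
Qed.

Lemma schur_partitionE (K : int -> {fset int}) :
  (forall x y, same_class x y <-> y \in K x) -> forall C, D C <-> exists g, C = K g.
Proof.
move=> classK; have classE C g : D C -> g \in C -> C = K g.
  move=> DC Cg; apply/fsetP => y; apply/idP/idP.
    by move/(mem_classP _ DC Cg)/classK.
  by move/classK/(mem_classP _ DC Cg).
move=> C; split=> [DC|[g ->]].
  by have /fset0Pn[g Cg] := class_neq0 DC; exists g; apply: classE.
by have [X [DX Xg]] := class_cover g; rewrite -(classE X g).
Qed.

Lemma same_class_pmE : same_class 1 (-1) ->
  forall x y, same_class x y <-> y \in [fset x; - x].
Proof.
move=> one_m1 x y; rewrite in_fset2; split=> [/same_class_pm[]->|/orP[]/eqP->].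
- by rewrite eqxx.
- by rewrite eqxx orbT.
- exact: same_class_refl.
- exact: same_class_opp_self.
Qed.

Lemma same_class_eqE : ~ same_class 1 (-1) ->
  forall x y, same_class x y <-> y \in [fset x].
Proof.
move=> not_one_m1 x y; rewrite in_fset1; split=> [xy|/eqP->]; last exact: same_class_refl.
case: (same_class_pm xy) => ey; rewrite ey ?eqxx //.
by move: xy; rewrite ey => /(same_class_opp_self_eq0 not_one_m1) ->; rewrite oppr0.
Qed.

End SchurPartitionOfZ.

Theorem theorem3p2 (F : fieldType) (charF0 : [pchar F]%R =i pred0)
    (D : {fset int} -> Prop) :
  is_schur_partition F D ->
  (forall C, D C <-> group_ring_partition C) \/
  (forall C, D C <-> symmetric_partition C).
Proof.
move=> schurD; have [one_m1|not_one_m1] := same_class_dec schurD 1 (-1).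
  right; apply: (schur_partitionE schurD (K := fun g => [fset g; - g])).
  exact: (same_class_pmE schurD charF0 one_m1).
left; apply: (schur_partitionE schurD (K := fun g => [fset g])).
exact: (same_class_eqE schurD charF0 not_one_m1).
Qed.
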